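(* Suppose $0<\epsilon\le 1$. Then the probability measure $\pi$ on $\mathcal{A}=\{A\subset\mathcal{E}\}$ defined in the context is stochastically dominated (with respect to inclusion) by independent Bernoulli bond percolation on $\mathcal{E}$ in which each edge $\{x,y\}$ is open with probability $2\epsilon J_{x,y}$. More precisely, for every $D\subset\mathcal{E}$ and every edge $e=\{x,y\}\in\mathcal{E}\setminus D$, \[ \pi(D\cup\{e\})\le 2\epsilon J_{x,y}\,\pi(D). \]
   Context: Setting: angles $\theta_u\in[0,2\pi)$, $u\in\mathbb{Z}^2$; couplings $J_{u,v}=J_{u-v}\ge0$ with $J_x=J_{-x}$, $\sum_xJ_x=1$. Fix $M\ge1$, $\Lambda=\{-M,\dots,M\}^2$, a boundary condition $\bar\theta$ (configurations satisfy $\theta_y=\bar\theta_y$ for $y\notin\Lambda$), and let $\mathcal{E}$ be the set of unordered pairs $\{u,v\}$ of distinct vertices meeting $\Lambda$. The interaction is written $f=\tilde f+\bar\epsilon$ where $\tilde f(t)=\sum_{k=1}^K c_k\cos(kt)$ is a trigonometric polynomial and $\bar\epsilon$ is a continuous $2\pi$-periodic function with $0\le\bar\epsilon\le\epsilon$. For $A\subset\mathcal{E}$ set \[ Z_A=\int\exp\Bigl\{\sum_{\{u,v\}\in\mathcal{E}}J_{u,v}\tilde f(\theta_u-\theta_v)\Bigr\}\prod_{\{u,v\}\in A}\bigl(e^{J_{u,v}\bar\epsilon(\theta_u-\theta_v)}-1\bigr)\,\prod_{u\in\Lambda}d\theta_u, \] $Z=\sum_{A\subset\mathcal{E}}Z_A$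 (which equals the partition function with interaction $f$), and $\pi(A)=Z_A/Z$. *)

From Stdlib Require Import Reals Lra Lia ZArith List Classical ClassicalEpsilon.
Import ListNotations.
Open Scope R_scope.

Definition V := (Z * Z)%type.

Definition veqb (u w : V) : bool :=
  (Z.eqb (fst u) (fst w) && Z.eqb (snd u) (snd w))%bool.

Definition vsub (u w : V) : V := ((fst u - fst w)%Z, (snd u - snd w)%Z).
Definition vopp (u : V) : V := ((- fst u)%Z, (- snd u)%Z).

Definition lsum {A : Type} (l : list A) (g : A -> R) : R :=
  fold_right (fun x acc => g x + acc) 0 l.
Definition lprod {A : Type} (l : list A) (g : A -> R) : R :=
  fold_right (fun x acc => g x * acc) 1 l.

Definition zrange (n : nat) : list Z :=
  map (fun k => (Z.of_nat k - Z.of_nat n)%Z) (seq 0 (2 * n + 1)).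
Definition box (n : nat) : list V := list_prod (zrange n) (zrange n).

Definition inLam (M : nat) (u : V) : bool :=
  ((Z.abs (fst u) <=? Z.of_nat M)%Z && (Z.abs (snd u) <=? Z.of_nat M)%Z)%bool.

(* sum over Z^2 of a family, as the limit of box partial sums
   (0 by convention if no limit exists) *)
Definition zsum (g : V -> R) : R :=
  epsilon (inhabits 0) (fun l => Un_cv (fun n => lsum (box n) g) l).

(* integral over [0, 2 pi] (Riemann; 0 by convention if not integrable) *)
Definition integral02pi (g : R -> R) : R :=
  match excluded_middle_informative (inhabited (Riemann_integrable g 0 (2 * PI))) with
  | left H => RiemannInt (epsilon H (fun _ => True))
  | right _ => 0
  end.

Definition update (th : V -> R) (u : V) (t : R) : V -> R :=
  fun w => if veqb w u then t else th w.

(* iterated integral over the angles at the sites in [sites], the other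
   angles being given by [th] *)
Fixpoint iint (sites : list V) (F : (V -> R) -> R) (th : V -> R) : R :=
  match sites with
  | [] => F th
  | u :: rest => integral02pi (fun t => iint rest F (update th u t))
  end.

(* integral over [0,2pi]^Lambda with boundary condition thbar *)
Definition integrate (M : nat) (thbar : V -> R) (F : (V -> R) -> R) : R :=
  iint (box M) F thbar.

Definition trigpoly (K : nat) (c : nat -> R) (t : R) : R :=
  lsum (seq 1 K) (fun k => c k * cos (INR k * t)).

(* Sum over unordered pairs {u,v} of distinct vertices meeting Lambda of
   J_{u-v} g(u,v): each pair with one endpoint u in Lambda is counted once
   with orientation (u,v); a pair with both endpoints in Lambda is counted
   as half the sum of both orientations. *)
Definition edge_sum (J : V -> R) (M : nat) (g : V -> V -> R) : R :=
  lsum (box M) (fun u =>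
    zsum (fun v =>
      if veqb v u then 0
      else (if inLam M v then / 2 else 1) * J (vsub u v) * g u v)).

Definition Hft (J : V -> R) (M : nat) (K : nat) (c : nat -> R) (th : V -> R) : R :=
  edge_sum J M (fun u v => trigpoly K c (th u - th v)).

(* Edges: (u,v) with u <> v and u or v in Lambda; unordered: lists of
   edges are considered modulo orientation *)
Definition is_edge (M : nat) (e : V * V) : Prop :=
  fst e <> snd e /\ (inLam M (fst e) = true \/ inLam M (snd e) = true).

Definition same_edge (e d : V * V) : Prop :=
  d = e \/ d = (snd e, fst e).

(* a finite set D of edges, represented by a list without repetitions
   (modulo orientation) *)
Fixpoint edge_set (M : nat) (D : list (V * V)) : Prop :=
  match D with
  | [] => True
  | e :: D' => is_edge M e /\ (forall d, In d D' -> ~ same_edge e d) /\ edge_set M D'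
  end.

Definition ZA (J : V -> R) (M : nat) (thbar : V -> R) (K : nat) (c : nat -> R)
  (epsbar : R -> R) (A : list (V * V)) : R :=
  integrate M thbar (fun th =>
    exp (Hft J M K c th) *
    lprod A (fun e => exp (J (vsub (fst e) (snd e)) * epsbar (th (fst e) - th (snd e))) - 1)).

(* Z = partition function with interaction f = ft + epsbar
   (= sum_A Z_A by expanding exp(J epsbar) = 1 + (exp(J epsbar) - 1)) *)
Definition Zpart (J : V -> R) (M : nat) (thbar : V -> R) (K : nat) (c : nat -> R)
  (epsbar : R -> R) : R :=
  integrate M thbar (fun th =>
    exp (edge_sum J M (fun u v => trigpoly K c (th u - th v) + epsbar (th u - th v)))).

Definition piA (J : V -> R) (M : nat) (thbar : V -> R) (K : nat) (c : nat -> R)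
  (epsbar : R -> R) (A : list (V * V)) : R :=
  ZA J M thbar K c epsbar A / Zpart J M thbar K c epsbar.

(* Write P_D(th) for the product over the edges {u,v} of D of the factors
   e^{J_{u-v} epsbar(th_u - th_v)} - 1, and H(th) for the Hamiltonian built
   from the trigonometric polynomial ft.  Then Z_{D+e} is the integral of
   e^H (e^{J_{xy} epsbar(th_x - th_y)} - 1) P_D and Z_D the integral of
   e^H P_D.  Since 0 <= J_{xy} epsbar <= J_{xy} eps <= 1 and e^a - 1 <= 2a
   on [0,1], the first integrand is pointwise at most 2 eps J_{xy} times the
   second; integrating and dividing by Z >= 0 gives the claim.

   The analytic work is to make "integration preserves pointwise
   inequalities" valid for the iterated integral, which is 0 on
   non-integrable slices. *)

From Stdlib Require Import Reals ZArith List Lra Lia Permutation Classical ClassicalEpsilon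
  FunctionalExtensionality.
From Coquelicot Require Import Coquelicot.
Import ListNotations.
Open Scope R_scope.

Lemma lsum_ext {A} (l : list A) f g :
  (forall x, In x l -> f x = g x) -> lsum l f = lsum l g.
Proof.
  induction l as [|a l IH]; intros H; unfold lsum in *; simpl; [lra|].
  rewrite (H a) by (left; auto). rewrite IH by (intros; apply H; right; auto). lra.
Qed.

Lemma lsum_le {A} (l : list A) f g :
  (forall x, In x l -> f x <= g x) -> lsum l f <= lsum l g.
Proof.
  induction l as [|a l IH]; intros H; unfold lsum in *; simpl; [lra|].
  apply Rplus_le_compat; [apply H; left; auto | apply IH; intros; apply H; right; auto].
Qed.

Lemma lsum_nonneg {A} (l : list A) f : (forall x, In x l -> 0 <= f x) -> 0 <= lsum l f.
Proof.
  induction l as [|a l IH]; intros H; unfold lsum in *; simpl; [lra|].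
  apply Rplus_le_le_0_compat; [apply H; left; auto | apply IH; intros; apply H; right; auto].
Qed.

Lemma lsum_minus {A} (l : list A) f g : lsum l (fun x => f x - g x) = lsum l f - lsum l g.
Proof. induction l; unfold lsum in *; simpl; [|rewrite IHl]; lra. Qed.

Lemma lsum_scal {A} (l : list A) f k : lsum l (fun x => k * f x) = k * lsum l f.
Proof. induction l; unfold lsum in *; simpl; [|rewrite IHl]; lra. Qed.

Lemma lsum_const {A} (l : list A) k : lsum l (fun _ => k) = INR (length l) * k.
Proof. induction l; unfold lsum in *; simpl length; [simpl|rewrite S_INR; simpl; rewrite IHl]; lra. Qed.

Lemma lsum_map {A B} (f : A -> B) l h : lsum (map f l) h = lsum l (fun x => h (f x)).
Proof. induction l; unfold lsum in *; simpl; [|rewrite IHl]; lra. Qed.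

Lemma lsum_abs {A} (l : list A) f : Rabs (lsum l f) <= lsum l (fun x => Rabs (f x)).
Proof.
  induction l; unfold lsum in *; simpl; [rewrite Rabs_R0; lra|].
  eapply Rle_trans; [apply Rabs_triang | lra].
Qed.

Lemma lsum_perm {A} (l l' : list A) h : Permutation l l' -> lsum l h = lsum l' h.
Proof. induction 1; unfold lsum in *; simpl in *; lra. Qed.

Lemma lsum_le_incl {A} (L l : list A) h :
  NoDup l -> incl l L -> (forall x, In x L -> 0 <= h x) -> lsum l h <= lsum L h.
Proof.
  revert l. induction L as [|a L IH]; intros l Hnd Hinc Hpos.
  - destruct l as [|b l]; [simpl; lra|]. destruct (Hinc b (or_introl eq_refl)).
  - assert (Ha : 0 <= h a) by (apply Hpos; left; auto).
    assert (HposL : forall x, In x L -> 0 <= h x) by (intros; apply Hpos; right; auto).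
    change (lsum (a :: L) h) with (h a + lsum L h).
    destruct (classic (In a l)) as [Hal|Hna].
    + destruct (in_split _ _ Hal) as [l1 [l2 ->]].
      rewrite (lsum_perm _ (a :: l1 ++ l2)) by (symmetry; apply Permutation_middle).
      destruct (NoDup_remove _ _ _ Hnd) as [Hnd' Hnot].
      assert (lsum (l1 ++ l2) h <= lsum L h); [|change (lsum (a :: l1 ++ l2) h) with
        (h a + lsum (l1 ++ l2) h); lra].
      apply IH; auto. intros z Hz.
      assert (Hz' : In z (l1 ++ a :: l2)) by
        (apply in_app_or in Hz; apply in_or_app; simpl; tauto).
      destruct (Hinc z Hz') as [->|]; [contradiction|auto].
    + assert (lsum l h <= lsum L h); [|lra].
      apply IH; auto. intros z Hz. destruct (Hinc z Hz) as [->|]; [contradiction|auto].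
Qed.

Lemma in_zrange n z : In z (zrange n) <-> (- Z.of_nat n <= z <= Z.of_nat n)%Z.
Proof.
  unfold zrange. rewrite in_map_iff. split.
  - intros [k [<- Hk]]. apply in_seq in Hk. lia.
  - intros Hz. exists (Z.to_nat (z + Z.of_nat n)). rewrite in_seq. lia.
Qed.

Lemma in_box n (v : V) :
  In v (box n) <-> (Z.abs (fst v) <= Z.of_nat n /\ Z.abs (snd v) <= Z.of_nat n)%Z.
Proof.
  destruct v as [a b]. unfold box. rewrite (in_prod_iff (zrange n) (zrange n) a b), !in_zrange.
  simpl. lia.
Qed.

Lemma nodup_prod {A B} (l : list A) (l' : list B) :
  NoDup l -> NoDup l' -> NoDup (list_prod l l').
Proof.
  intros H1 H2. induction H1 as [|a l Ha Hl IH]; simpl; [constructor|].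
  apply NoDup_app; auto.
  - apply FinFun.Injective_map_NoDup; auto. intros p q E; injection E; auto.
  - intros [p q] Hin Hin'. apply in_map_iff in Hin as [z [E _]]. injection E as <- <-.
    apply in_prod_iff in Hin'. tauto.
Qed.

Lemma nodup_box n : NoDup (box n).
Proof.
  assert (Hz : NoDup (zrange n)).
  { apply FinFun.Injective_map_NoDup; [intros a b; lia | apply seq_NoDup]. }
  apply nodup_prod; auto.
Qed.

Lemma box_incl n m : (n <= m)%nat -> incl (box n) (box m).
Proof. intros Hnm v. rewrite !in_box. lia. Qed.

Lemma box_sum_growing (f : V -> R) : (forall v, 0 <= f v) -> Un_growing (fun n => lsum (box n) f).
Proof. intros Hf n. apply lsum_le_incl; auto using nodup_box, box_incl. Qed.

Lemma nonneg_box_sum_cv (f : V -> R) K :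
  (forall v, 0 <= f v) -> (forall n, lsum (box n) f <= K) ->
  exists l, Un_cv (fun n => lsum (box n) f) l.
Proof.
  intros Hf HK. destruct (growing_cv _ (box_sum_growing f Hf)) as [l Hl].
  - exists K. intros x [n ->]. apply HK.
  - exists l; exact Hl.
Qed.

Lemma zsum_spec (h : V -> R) :
  (exists l, Un_cv (fun n => lsum (box n) h) l) -> Un_cv (fun n => lsum (box n) h) (zsum h).
Proof. intros Hex. exact (epsilon_spec (inhabits 0) _ Hex). Qed.

Lemma cv_abs_le (u : nat -> R) l B : Un_cv u l -> (forall n, Rabs (u n) <= B) -> Rabs l <= B.
Proof.
  intros Hcv Hb. apply Rabs_le_between.
  assert (Hc : forall c, Un_cv (fun _ => c) c)
    by (intros c e He; exists 0%nat; intros; unfold R_dist; rewrite Rminus_diag, Rabs_R0; auto).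
  split; [eapply Rle_cv_lim; [|apply Hc|exact Hcv] | eapply Rle_cv_lim; [|exact Hcv|apply Hc]];
    intros n; pose proof (proj1 (Rabs_le_between _ _) (Hb n)); lra.
Qed.

Section Summability.

Variable J : V -> R.
Hypothesis HJnn : forall x, 0 <= J x.
Hypothesis HJsum : Un_cv (fun n => lsum (box n) J) 1.

Lemma box_sum_J_le1 n : lsum (box n) J <= 1.
Proof. apply (growing_ineq (fun n => lsum (box n) J)); auto using box_sum_growing. Qed.

Lemma J_le1 d : J d <= 1.
Proof.
  set (n := (Z.to_nat (Z.abs (fst d)) + Z.to_nat (Z.abs (snd d)))%nat).
  eapply Rle_trans; [|apply (box_sum_J_le1 n)].
  replace (J d) with (lsum [d] J) by (unfold lsum; simpl; ring).
  apply lsum_le_incl; auto.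
  - repeat constructor; simpl; auto.
  - intros z [<-|[]]. apply in_box. unfold n; lia.
Qed.

Lemma shifted_box_sum_J_le1 u n : lsum (box n) (fun v => J (vsub u v)) <= 1.
Proof.
  set (m := (n + Z.to_nat (Z.abs (fst u)) + Z.to_nat (Z.abs (snd u)))%nat).
  rewrite <- (lsum_map (vsub u)). eapply Rle_trans; [|apply (box_sum_J_le1 m)].
  apply lsum_le_incl; auto.
  - apply FinFun.Injective_map_NoDup; [|apply nodup_box].
    intros [a b] [a' b'] E. unfold vsub in E; simpl in E. injection E; intros. f_equal; lia.
  - intros w Hw. apply in_map_iff in Hw as [v [<- Hv]].
    rewrite in_box in *. unfold vsub, m; simpl. lia.
Qed.

Definition dominated (u : V) (K : R) (h : V -> R) : Prop :=
  0 <= K /\ forall v, Rabs (h v) <= K * J (vsub u v).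

Lemma dominated_box_sum u K h n :
  dominated u K h -> lsum (box n) (fun v => Rabs (h v)) <= K.
Proof.
  intros [HK Hh]. eapply Rle_trans; [apply lsum_le; intros; apply Hh|].
  rewrite lsum_scal. pose proof (shifted_box_sum_J_le1 u n). nra.
Qed.

(* Dominated families are summable: split into positive and negative parts. *)
Lemma dominated_cv u K h :
  dominated u K h -> Un_cv (fun n => lsum (box n) h) (zsum h).
Proof.
  intros Hd. apply zsum_spec.
  set (p := fun v => (Rabs (h v) + h v) / 2). set (q := fun v => (Rabs (h v) - h v) / 2).
  assert (Hpart : forall f, (forall v, 0 <= f v <= Rabs (h v)) ->
                  exists l, Un_cv (fun n => lsum (box n) f) l).
  { intros f Hf. apply (nonneg_box_sum_cv f K); [apply Hf|].
    intros n. eapply Rle_trans; [|apply (dominated_box_sum u K h n Hd)].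
    apply lsum_le; intros; apply Hf. }
  assert (Habs : forall v, - Rabs (h v) <= h v <= Rabs (h v))
    by (intros v; apply Rabs_le_between, Rle_refl).
  destruct (Hpart p) as [lp Hp]; [intros v; unfold p; specialize (Habs v); lra|].
  destruct (Hpart q) as [lq Hq]; [intros v; unfold q; specialize (Habs v); lra|].
  exists (lp - lq).
  replace (fun n => lsum (box n) h) with (fun n => lsum (box n) p - lsum (box n) q).
  - apply CV_minus; auto.
  - apply functional_extensionality; intros n. rewrite <- lsum_minus.
    apply lsum_ext. intros; unfold p, q; field.
Qed.

Lemma zsum_abs_le u K h : dominated u K h -> Rabs (zsum h) <= K.
Proof.
  intros Hd. apply (cv_abs_le _ _ _ (dominated_cv u K h Hd)). intros n.
  eapply Rle_trans; [apply lsum_abs | apply (dominated_box_sum u K h n Hd)].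
Qed.

Lemma zsum_minus u K1 K2 h1 h2 :
  dominated u K1 h1 -> dominated u K2 h2 -> zsum (fun v => h1 v - h2 v) = zsum h1 - zsum h2.
Proof.
  intros H1 H2. apply (UL_sequence (fun n => lsum (box n) (fun v => h1 v - h2 v))).
  - apply (dominated_cv u (K1 + K2)). destruct H1 as [HK1 H1], H2 as [HK2 H2]. split; [lra|].
    intros v. unfold Rminus. eapply Rle_trans; [apply Rabs_triang|]. rewrite Rabs_Ropp.
    specialize (H1 v). specialize (H2 v). lra.
  - replace (fun n => lsum (box n) (fun v => h1 v - h2 v))
      with (fun n => lsum (box n) h1 - lsum (box n) h2)
      by (apply functional_extensionality; intros; symmetry; apply lsum_minus).
    apply CV_minus; eapply dominated_cv; eauto.
Qed.

End Summability.

Lemma two_PI_pos : 0 < 2 * PI.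
Proof. pose proof PI_RGT_0. lra. Qed.

Lemma ex_RInt_02pi f : continuity f -> ex_RInt f 0 (2 * PI).
Proof.
  intros Hc. apply (ex_RInt_continuous (V := R_CompleteNormedModule)).
  intros z _. apply continuity_pt_filterlim, Hc.
Qed.

Lemma integral02pi_RInt f : continuity f -> integral02pi f = RInt f 0 (2 * PI).
Proof.
  intros Hc. unfold integral02pi. destruct (excluded_middle_informative _) as [H|H].
  - rewrite (RInt_Reals f 0 (2 * PI) (epsilon H (fun _ => True))). reflexivity.
  - exfalso. apply H. constructor. apply continuity_implies_RiemannInt.
    + pose proof two_PI_pos; lra.
    + intros; apply Hc.
Qed.

(* Positivity needs no regularity: non-integrable functions integrate to 0. *)
Lemma integral02pi_ge0 g : (forall t, 0 <= g t) -> 0 <= integral02pi g.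
Proof.
  intros Hg. unfold integral02pi. destruct (excluded_middle_informative _) as [H|H]; [|lra].
  rewrite <- RInt_Reals. apply RInt_ge_0; [pose proof two_PI_pos; lra| |intros; apply Hg].
  apply ex_RInt_Reals_1, (epsilon H (fun _ => True)).
Qed.

Lemma iint_ge0 sites F th : (forall th, 0 <= F th) -> 0 <= iint sites F th.
Proof.
  revert th; induction sites; intros th H; simpl; auto.
  apply integral02pi_ge0. intros; auto.
Qed.

Definition sup_close (d : R) (th th' : V -> R) : Prop :=
  forall z, Rabs (th z - th' z) <= d.

Definition unif_cont (F : (V -> R) -> R) : Prop :=
  forall eps, 0 < eps -> exists del, 0 < del /\
    forall th th', sup_close del th th' -> Rabs (F th - F th') < eps.

Lemma sup_close_nonneg d th th' : sup_close d th th' -> 0 <= d.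
Proof. intros H. eapply Rle_trans; [apply Rabs_pos | apply (H (0%Z, 0%Z))]. Qed.

Lemma sup_close_weaken d d' th th' : d <= d' -> sup_close d th th' -> sup_close d' th th'.
Proof. intros Hd H z. eapply Rle_trans; [apply H | exact Hd]. Qed.

Lemma sup_close_update d th th' u t :
  sup_close d th th' -> sup_close d (update th u t) (update th' u t).
Proof.
  intros H z. unfold update. destruct (veqb z u); auto.
  rewrite Rminus_diag, Rabs_R0. eapply sup_close_nonneg; eauto.
Qed.

Lemma sup_close_slice th u t1 t2 : sup_close (Rabs (t1 - t2)) (update th u t1) (update th u t2).
Proof.
  intros z. unfold update. destruct (veqb z u); [lra|].
  rewrite Rminus_diag, Rabs_R0. apply Rabs_pos.
Qed.

Lemma unif_cont_slice F th u : unif_cont F -> continuity (fun t => F (update th u t)).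
Proof.
  intros HF t0 eps Heps. destruct (HF eps Heps) as [d [Hd H]].
  exists d; split; auto. intros t [_ Ht]. simpl in *. unfold R_dist in *.
  apply H. apply (sup_close_weaken (Rabs (t - t0))); [lra | apply sup_close_slice].
Qed.

Lemma iint_unif_cont sites F : unif_cont F -> unif_cont (iint sites F).
Proof.
  induction sites as [|u rest IH]; intros HF; simpl; auto.
  intros eps Heps. pose proof two_PI_pos.
  set (e := eps / (2 * PI + 1)).
  assert (He : 0 < e) by (apply Rdiv_lt_0_compat; lra).
  assert (Hee : 2 * PI * e < eps) by (unfold e; apply (Rmult_lt_reg_r (2 * PI + 1)); [lra|];
    field_simplify; lra).
  destruct (IH HF e He) as [d [Hd Hclose]]. exists d; split; auto.
  intros th th' Hth.
  rewrite !integral02pi_RInt by (apply unif_cont_slice; auto).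
  rewrite <- (RInt_minus (V := R_CompleteNormedModule)) by (apply ex_RInt_02pi, unif_cont_slice; auto).
  eapply Rle_lt_trans; [apply (abs_RInt_le_const _ 0 (2 * PI) e)|]; try lra.
  - apply ex_RInt_02pi, continuity_minus; apply unif_cont_slice; auto.
  - intros t _. left. apply Hclose, sup_close_update, Hth.
Qed.

Lemma iint_mono sites F1 F2 : unif_cont F1 -> unif_cont F2 ->
  (forall th, F1 th <= F2 th) -> forall th, iint sites F1 th <= iint sites F2 th.
Proof.
  intros H1 H2 Hle. induction sites as [|u rest IH]; intros th; simpl; auto.
  rewrite !integral02pi_RInt by (apply unif_cont_slice, iint_unif_cont; auto).
  apply RInt_le; [pose proof two_PI_pos; lra| | |intros; apply IH];
    apply ex_RInt_02pi, unif_cont_slice, iint_unif_cont; auto.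
Qed.

Lemma iint_scal sites F C : unif_cont F ->
  forall th, iint sites (fun th => C * F th) th = C * iint sites F th.
Proof.
  intros HF. induction sites as [|u rest IH]; intros th; simpl; auto.
  assert (Hc : continuity (fun t => iint rest F (update th u t)))
    by (apply unif_cont_slice, iint_unif_cont; auto).
  replace (fun t => iint rest (fun th => C * F th) (update th u t))
    with (fun t => C * iint rest F (update th u t))
    by (apply functional_extensionality; intros; symmetry; apply IH).
  rewrite !integral02pi_RInt by first [exact Hc | apply (continuity_scal _ C), Hc].
  apply (RInt_scal (V := R_CompleteNormedModule)), ex_RInt_02pi, Hc.
Qed.

(* Regular observables: bounded and uniformly continuous.  They are closed
   under the operations used to build the integrands Z_A. *)

Definition bounded (F : (V -> R) -> R) : Prop := exists B, forall th, Rabs (F th) <= B.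

Definition regular (F : (V -> R) -> R) : Prop := bounded F /\ unif_cont F.

Definition unif_cont_R (g : R -> R) : Prop :=
  forall eps, 0 < eps -> exists del, 0 < del /\
    forall a b, Rabs (a - b) < del -> Rabs (g a - g b) < eps.

Lemma lipschitz_unif_cont F L :
  (forall d th th', sup_close d th th' -> Rabs (F th - F th') <= L * d) -> unif_cont F.
Proof.
  intros H eps Heps. pose proof (Rabs_pos L). pose proof (Rle_abs L).
  exists (eps / (Rabs L + 1)). split; [apply Rdiv_lt_0_compat; lra|].
  intros th th' Hth. eapply Rle_lt_trans; [apply (H _ _ _ Hth)|].
  assert (Hq : eps / (Rabs L + 1) * (Rabs L + 1) = eps) by (field; lra).
  assert (0 < eps / (Rabs L + 1)) by (apply Rdiv_lt_0_compat; lra). nra.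
Qed.

Lemma bounded_nonneg (F : (V -> R) -> R) B : (forall th, Rabs (F th) <= B) -> 0 <= B.
Proof. intros H. eapply Rle_trans; [apply Rabs_pos | apply (H (fun _ => 0))]. Qed.

Lemma regular_const c : regular (fun _ => c).
Proof.
  split; [exists (Rabs c); intros; lra|].
  apply (lipschitz_unif_cont _ 0). intros d th th' _. rewrite Rminus_diag, Rabs_R0. lra.
Qed.

Lemma regular_minus F G : regular F -> regular G -> regular (fun th => F th - G th).
Proof.
  intros [[B1 HB1] U1] [[B2 HB2] U2]. split.
  - exists (B1 + B2). intros th. unfold Rminus. eapply Rle_trans; [apply Rabs_triang|].
    rewrite Rabs_Ropp. specialize (HB1 th); specialize (HB2 th); lra.
  - intros eps Heps.
    destruct (U1 (eps / 2)) as [d1 [Hd1 H1]]; [lra|]. destruct (U2 (eps / 2)) as [d2 [Hd2 H2]]; [lra|].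
    exists (Rmin d1 d2). split; [apply Rmin_glb_lt; auto|]. intros th th' Hth.
    assert (Hc1 : sup_close d1 th th') by (eapply sup_close_weaken; [apply Rmin_l | exact Hth]).
    assert (Hc2 : sup_close d2 th th') by (eapply sup_close_weaken; [apply Rmin_r | exact Hth]).
    specialize (H1 _ _ Hc1). specialize (H2 _ _ Hc2).
    replace (F th - G th - (F th' - G th')) with ((F th - F th') + - (G th - G th')) by ring.
    eapply Rle_lt_trans; [apply Rabs_triang|]. rewrite Rabs_Ropp. lra.
Qed.

Lemma Rabs_mult_diff a1 a2 b1 b2 A B :
  Rabs a1 <= A -> Rabs b2 <= B ->
  Rabs (a1 * b1 - a2 * b2) <= A * Rabs (b1 - b2) + B * Rabs (a1 - a2).
Proof.
  intros HA HB. replace (a1 * b1 - a2 * b2) with (a1 * (b1 - b2) + b2 * (a1 - a2)) by ring.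
  eapply Rle_trans; [apply Rabs_triang|]. rewrite !Rabs_mult.
  apply Rplus_le_compat; apply Rmult_le_compat_r; auto using Rabs_pos.
Qed.

Lemma regular_mult F G : regular F -> regular G -> regular (fun th => F th * G th).
Proof.
  intros [[B1 HB1] U1] [[B2 HB2] U2].
  pose proof (bounded_nonneg _ _ HB1). pose proof (bounded_nonneg _ _ HB2). split.
  - exists (B1 * B2). intros th. rewrite Rabs_mult. apply Rmult_le_compat; auto using Rabs_pos.
  - intros eps Heps.
    set (e := eps / (2 * (B1 + B2 + 1))).
    assert (He : 0 < e) by (apply Rdiv_lt_0_compat; lra).
    assert (Hee : e * (2 * (B1 + B2 + 1)) = eps) by (unfold e; field; lra).
    destruct (U1 e He) as [d1 [Hd1 H1]]. destruct (U2 e He) as [d2 [Hd2 H2]].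
    exists (Rmin d1 d2). split; [apply Rmin_glb_lt; auto|]. intros th th' Hth.
    assert (Hc1 : sup_close d1 th th') by (eapply sup_close_weaken; [apply Rmin_l | exact Hth]).
    assert (Hc2 : sup_close d2 th th') by (eapply sup_close_weaken; [apply Rmin_r | exact Hth]).
    specialize (H1 _ _ Hc1). specialize (H2 _ _ Hc2).
    eapply Rle_lt_trans; [apply (Rabs_mult_diff _ _ _ _ B1 B2); auto|].
    pose proof (Rabs_pos (G th - G th')). pose proof (Rabs_pos (F th - F th')). nra.
Qed.

Lemma unif_cont_comp (g : R -> R) F : unif_cont_R g -> unif_cont F -> unif_cont (fun th => g (F th)).
Proof.
  intros Hg HF eps Heps. destruct (Hg eps Heps) as [d [Hd H]].
  destruct (HF d Hd) as [d' [Hd' H']]. exists d'; split; auto.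
Qed.

(* exp is uniformly continuous on the bounded range of a regular observable. *)
Lemma regular_exp F : regular F -> regular (fun th => exp (F th)).
Proof.
  intros [[B HB] U]. split.
  - exists (exp B). intros th. rewrite Rabs_right by (left; apply exp_pos).
    destruct (proj1 (Rabs_le_between _ _) (HB th)) as [_ [Hlt| ->]]; [|lra].
    left; apply exp_increasing; auto.
  - intros eps Heps.
    destruct (Heine_cor2 (f := exp) (a := - B) (b := B)
               (fun x _ => derivable_continuous_pt _ _ (derivable_pt_exp x))
               (mkposreal eps Heps)) as [d Hd].
    destruct (U d (cond_pos d)) as [d' [Hd' H']]. exists d'; split; auto.
    intros th th' Hth. apply Hd; [apply Rabs_le_between, HB .. | apply H'; auto].
Qed.

Lemma periodic_nat (g : R -> R) : (forall t, g (t + 2 * PI) = g t) ->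
  forall n t, g (t + 2 * PI * INR n) = g t.
Proof.
  intros H n; induction n as [|n IH]; intros t; [simpl; f_equal; ring|].
  rewrite S_INR, <- (IH t), <- (H (t + 2 * PI * INR n)). f_equal; ring.
Qed.

Lemma periodic_Z (g : R -> R) : (forall t, g (t + 2 * PI) = g t) ->
  forall k t, g (t + 2 * PI * IZR k) = g t.
Proof.
  intros H k t. destruct (Z_le_gt_dec 0 k) as [Hk|Hk].
  - replace k with (Z.of_nat (Z.to_nat k)) by lia. rewrite <- INR_IZR_INZ. apply periodic_nat; auto.
  - replace k with (- Z.of_nat (Z.to_nat (- k)))%Z by lia. rewrite opp_IZR, <- INR_IZR_INZ.
    set (n := Z.to_nat (- k)). rewrite <- (periodic_nat g H n (t + 2 * PI * - INR n)). f_equal; ring.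
Qed.

Lemma reduce_mod_2pi x : exists m, 0 <= x + 2 * PI * IZR m <= 2 * PI.
Proof.
  pose proof two_PI_pos. exists (1 - up (x / (2 * PI)))%Z. rewrite minus_IZR.
  destruct (archimed (x / (2 * PI))) as [H1 H2].
  set (r := x / (2 * PI)) in *. assert (Hx : x = 2 * PI * r) by (unfold r; field; lra).
  rewrite Hx. set (u := IZR (up r)) in *. nra.
Qed.

(* Continuous 2pi-periodic functions are uniformly continuous on R: after
   a shift by a multiple of 2pi, Heine's theorem on [-2pi, 4pi] applies. *)
Lemma periodic_unif_cont (g : R -> R) :
  continuity g -> (forall t, g (t + 2 * PI) = g t) -> unif_cont_R g.
Proof.
  intros Hc Hp eps Heps. pose proof PI2_3_2.
  destruct (Heine_cor2 (f := g) (a := - (2 * PI)) (b := 4 * PI) (fun x _ => Hc x)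
             (mkposreal eps Heps)) as [d Hd].
  exists (Rmin d 1). split; [apply Rmin_glb_lt; [apply cond_pos | lra]|].
  intros a b Hab. destruct (reduce_mod_2pi a) as [m Hm].
  rewrite <- (periodic_Z g Hp m a), <- (periodic_Z g Hp m b).
  assert (Hd1 : Rabs (a - b) < d) by (eapply Rlt_le_trans; [apply Hab | apply Rmin_l]).
  assert (Hd2 : Rabs (a - b) < 1) by (eapply Rlt_le_trans; [apply Hab | apply Rmin_r]).
  apply Rabs_def2 in Hd2.
  apply Hd; try lra.
  replace (a + 2 * PI * IZR m - (b + 2 * PI * IZR m)) with (a - b) by ring. auto.
Qed.

Lemma angle_diff_close d th th' a b :
  sup_close d th th' -> Rabs ((th a - th b) - (th' a - th' b)) <= 2 * d.
Proof.
  intros H. replace ((th a - th b) - (th' a - th' b)) with ((th a - th' a) + - (th b - th' b))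
    by ring.
  eapply Rle_trans; [apply Rabs_triang|]. rewrite Rabs_Ropp. pose proof (H a). pose proof (H b). lra.
Qed.

Lemma regular_edge_factor (Je eps : R) (epsbar : R -> R) a b : continuity epsbar ->
  (forall t, epsbar (t + 2 * PI) = epsbar t) -> (forall t, 0 <= epsbar t <= eps) ->
  regular (fun th => exp (Je * epsbar (th a - th b)) - 1).
Proof.
  intros Hc Hp Hb. apply regular_minus; [|apply regular_const]. apply regular_exp.
  apply regular_mult; [apply regular_const|]. split.
  - exists eps. intros th. specialize (Hb (th a - th b)). rewrite Rabs_right; lra.
  - apply (unif_cont_comp epsbar); [apply periodic_unif_cont; auto|].
    apply (lipschitz_unif_cont _ 2). intros; apply angle_diff_close; auto.
Qed.

Lemma lipschitz_of_derivative f f' L :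
  (forall x, derivable_pt_lim f x (f' x)) -> (forall x, Rabs (f' x) <= L) ->
  forall x y, Rabs (f x - f y) <= L * Rabs (x - y).
Proof.
  intros Hd Hb.
  assert (Hlt : forall x y, x < y -> Rabs (f x - f y) <= L * Rabs (x - y)).
  { intros x y H. destruct (MVT_cor2 f f' x y H (fun c _ => Hd c)) as [c [E _]].
    rewrite Rabs_minus_sym, E, (Rabs_minus_sym x y), Rabs_mult.
    apply Rmult_le_compat_r; auto using Rabs_pos. }
  intros x y. destruct (total_order_T x y) as [[H| ->]|H]; auto.
  - rewrite !Rminus_diag, Rabs_R0. pose proof (Hb 0). pose proof (Rabs_pos (f' 0)). lra.
  - rewrite Rabs_minus_sym, (Rabs_minus_sym x). auto.
Qed.

Lemma cos_lipschitz x y : Rabs (cos x - cos y) <= Rabs (x - y).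
Proof.
  rewrite <- (Rmult_1_l (Rabs (x - y))).
  apply (lipschitz_of_derivative cos (fun t => - sin t)); [apply derivable_pt_lim_cos|].
  intros t. rewrite Rabs_Ropp. pose proof (SIN_bound t). apply Rabs_le; lra.
Qed.

Definition trig_bound (K : nat) (c : nat -> R) : R := lsum (seq 1 K) (fun k => Rabs (c k)).
Definition trig_lip (K : nat) (c : nat -> R) : R := lsum (seq 1 K) (fun k => Rabs (c k) * INR k).

Lemma trig_bound_nonneg K c : 0 <= trig_bound K c.
Proof. apply lsum_nonneg. intros. apply Rabs_pos. Qed.

Lemma trig_lip_nonneg K c : 0 <= trig_lip K c.
Proof. apply lsum_nonneg. intros. apply Rmult_le_pos; auto using Rabs_pos, pos_INR. Qed.

Lemma trigpoly_bound K c t : Rabs (trigpoly K c t) <= trig_bound K c.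
Proof.
  unfold trigpoly, trig_bound. eapply Rle_trans; [apply lsum_abs|]. apply lsum_le. intros k _.
  rewrite Rabs_mult. pose proof (COS_bound (INR k * t)). pose proof (Rabs_pos (c k)).
  assert (Rabs (cos (INR k * t)) <= 1) by (apply Rabs_le; lra). nra.
Qed.

Lemma trigpoly_lipschitz K c a b :
  Rabs (trigpoly K c a - trigpoly K c b) <= trig_lip K c * Rabs (a - b).
Proof.
  unfold trigpoly, trig_lip. rewrite <- lsum_minus, Rmult_comm, <- lsum_scal.
  eapply Rle_trans; [apply lsum_abs|]. apply lsum_le. intros k _.
  replace (c k * cos (INR k * a) - c k * cos (INR k * b))
    with (c k * (cos (INR k * a) - cos (INR k * b))) by ring.
  pose proof (cos_lipschitz (INR k * a) (INR k * b)) as Hcos.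
  replace (INR k * a - INR k * b) with (INR k * (a - b)) in Hcos by ring.
  rewrite Rabs_mult, (Rabs_right (INR k)) in Hcos by (apply Rle_ge, pos_INR).
  rewrite Rabs_mult. pose proof (Rabs_pos (c k)). nra.
Qed.

Definition bond_energy (J : V -> R) (M K : nat) (c : nat -> R) (th : V -> R) (u v : V) : R :=
  if veqb v u then 0
  else (if inLam M v then / 2 else 1) * J (vsub u v) * trigpoly K c (th u - th v).

Lemma Hft_bond_energy J M K c th :
  Hft J M K c th = lsum (box M) (fun u => zsum (bond_energy J M K c th u)).
Proof. reflexivity. Qed.

Lemma weighted_coupling_bound w j x B :
  0 <= w <= 1 -> 0 <= j -> Rabs x <= B -> Rabs (w * j * x) <= B * j.
Proof.
  intros Hw Hj Hx. rewrite !Rabs_mult, (Rabs_right w), (Rabs_right j) by lra.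
  pose proof (Rabs_pos x). assert (w * Rabs x <= B) by nra. nra.
Qed.

Lemma inLam_weight M v : 0 <= (if inLam M v then / 2 else 1) <= 1.
Proof. destruct (inLam M v); lra. Qed.

Section Hamiltonian.

Variable J : V -> R.
Hypothesis HJnn : forall x, 0 <= J x.
Hypothesis HJsum : Un_cv (fun n => lsum (box n) J) 1.
Variables (M K : nat) (c : nat -> R).

(* Bond energies at u are dominated by the couplings, as are their changes
   between close configurations; this is what makes H finite and Lipschitz. *)
Lemma bond_energy_dominated th u : dominated J u (trig_bound K c) (bond_energy J M K c th u).
Proof.
  split; [apply trig_bound_nonneg|]. intros v. unfold bond_energy.
  destruct (veqb v u).
  - rewrite Rabs_R0. apply Rmult_le_pos; auto using trig_bound_nonneg.
  - apply weighted_coupling_bound; auto using inLam_weight, trigpoly_bound.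
Qed.

Lemma bond_energy_diff_dominated d th th' u : sup_close d th th' ->
  dominated J u (trig_lip K c * (2 * d))
    (fun v => bond_energy J M K c th u v - bond_energy J M K c th' u v).
Proof.
  intros Hd. pose proof (sup_close_nonneg _ _ _ Hd). pose proof (trig_lip_nonneg K c).
  split; [nra|]. intros v. unfold bond_energy. destruct (veqb v u).
  - rewrite Rminus_diag, Rabs_R0. apply Rmult_le_pos; auto. nra.
  - rewrite <- Rmult_minus_distr_l. apply weighted_coupling_bound; auto using inLam_weight.
    eapply Rle_trans; [apply trigpoly_lipschitz|].
    apply Rmult_le_compat_l; auto. apply angle_diff_close; auto.
Qed.

Lemma regular_Hft : regular (Hft J M K c).
Proof.
  set (n := INR (length (box M))). split.
  - exists (n * trig_bound K c). intros th. rewrite Hft_bond_energy.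
    unfold n. rewrite <- lsum_const. eapply Rle_trans; [apply lsum_abs|]. apply lsum_le.
    intros u _. eapply zsum_abs_le; eauto using bond_energy_dominated.
  - apply (lipschitz_unif_cont _ (n * (trig_lip K c * 2))). intros d th th' Hd.
    rewrite !Hft_bond_energy, <- lsum_minus.
    replace (n * (trig_lip K c * 2) * d) with (n * (trig_lip K c * (2 * d))) by ring.
    unfold n. rewrite <- lsum_const. eapply Rle_trans; [apply lsum_abs|]. apply lsum_le.
    intros u _. erewrite <- zsum_minus; eauto using bond_energy_dominated.
    eapply zsum_abs_le; eauto using bond_energy_diff_dominated.
Qed.

End Hamiltonian.

(* The elementary inequality behind the factor 2: e^a - 1 <= 2a on [0,1],
   from e^a <= 1 + a + a^2, i.e. (1 + t + t^2) e^{-t} is nondecreasing. *)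
Lemma exp_minus_1_le a : 0 <= a <= 1 -> exp a - 1 <= 2 * a.
Proof.
  intros Ha. destruct (Req_dec a 0) as [->|Hne]; [rewrite exp_0; lra|].
  set (h := fun t => (1 + t + t * t) * exp (- t)).
  set (h' := fun t => (t - t * t) * exp (- t)).
  assert (Hd : forall t, derivable_pt_lim h t (h' t)).
  { intros t. apply is_derive_Reals. unfold h, h'. auto_derive; auto. ring. }
  destruct (MVT_cor2 h h' 0 a ltac:(lra) (fun c _ => Hd c)) as [c [E Hc]].
  unfold h, h' in E. rewrite Ropp_0, exp_0 in E.
  assert (0 <= (c - c * c) * exp (- c)) by (apply Rmult_le_pos; [nra | left; apply exp_pos]).
  assert (Hgrow : 1 <= (1 + a + a * a) * exp (- a)) by nra.
  assert (Ee : exp (- a) * exp a = 1)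
    by (rewrite <- exp_plus; replace (- a + a) with 0 by ring; apply exp_0).
  pose proof (exp_pos a). nra.
Qed.

Lemma edge_factor_bounds Je e eps :
  0 <= Je <= 1 -> 0 <= e <= eps -> eps <= 1 -> 0 <= exp (Je * e) - 1 <= 2 * eps * Je.
Proof.
  intros HJe He Heps. pose proof (exp_ineq1_le (Je * e)).
  assert (0 <= Je * e) by nra. assert (Je * e <= Je * eps) by (apply Rmult_le_compat_l; lra).
  pose proof (exp_minus_1_le (Je * e) ltac:(nra)). lra.
Qed.

Definition edge_weight (J : V -> R) (epsbar : R -> R) (A : list (V * V)) (th : V -> R) : R :=
  lprod A (fun e => exp (J (vsub (fst e) (snd e)) * epsbar (th (fst e) - th (snd e))) - 1).

Lemma ZA_integral J M thbar K c epsbar A :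
  ZA J M thbar K c epsbar A =
  integrate M thbar (fun th => exp (Hft J M K c th) * edge_weight J epsbar A th).
Proof. reflexivity. Qed.

(* The normalisation 1/Z is nonnegative (with / 0 = 0 in the degenerate case). *)
Lemma inv_Zpart_nonneg J M thbar K c epsbar : 0 <= / Zpart J M thbar K c epsbar.
Proof.
  assert (HZ : 0 <= Zpart J M thbar K c epsbar)
    by (apply iint_ge0; intros; left; apply exp_pos).
  destruct HZ as [HZ|HZ]; [left; apply Rinv_0_lt_compat, HZ | rewrite <- HZ, Rinv_0; lra].
Qed.

Section Domination.

Variable J : V -> R.
Hypothesis HJnn : forall x, 0 <= J x.
Hypothesis HJsum : Un_cv (fun n => lsum (box n) J) 1.
Variables (M K : nat) (c : nat -> R) (thbar : V -> R).
Variables (eps : R) (epsbar : R -> R).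
Hypothesis Hepsbar_cont : continuity epsbar.
Hypothesis Hepsbar_per : forall t, epsbar (t + 2 * PI) = epsbar t.
Hypothesis Hepsbar_bd : forall t, 0 <= epsbar t <= eps.
Hypothesis Heps : eps <= 1.

Lemma edge_weight_nonneg A th : 0 <= edge_weight J epsbar A th.
Proof.
  induction A as [|e A IH]; unfold edge_weight, lprod in *; simpl; [lra|].
  apply Rmult_le_pos; auto.
  apply (edge_factor_bounds _ _ eps); auto using J_le1.
Qed.

Lemma regular_edge_weight A : regular (edge_weight J epsbar A).
Proof.
  induction A as [|e A IH]; [apply regular_const|].
  apply (regular_mult (fun th => exp (J (vsub (fst e) (snd e)) *
                                      epsbar (th (fst e) - th (snd e))) - 1)); auto.
  apply regular_edge_factor with (eps := eps); auto.
Qed.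

Lemma ZA_cons_le x y A :
  ZA J M thbar K c epsbar ((x, y) :: A) <= 2 * eps * J (vsub x y) * ZA J M thbar K c epsbar A.
Proof.
  set (C := 2 * eps * J (vsub x y)).
  set (W := fun th => exp (Hft J M K c th) * edge_weight J epsbar A th).
  assert (HW : regular W) by (apply regular_mult; auto using regular_exp, regular_Hft, regular_edge_weight).
  rewrite !ZA_integral. unfold integrate. fold W.
  rewrite <- iint_scal by apply HW.
  apply iint_mono.
  - apply regular_mult; auto using regular_exp, regular_Hft.
    apply (regular_edge_weight ((x, y) :: A)).
  - apply regular_mult; [apply regular_const | apply HW].
  - intros th. unfold W.
    change (edge_weight J epsbar ((x, y) :: A) th) with
      ((exp (J (vsub x y) * epsbar (th x - th y)) - 1) * edge_weight J epsbar A th).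
    destruct (edge_factor_bounds (J (vsub x y)) (epsbar (th x - th y)) eps) as [_ Hup];
      auto using J_le1.
    set (E := exp (Hft J M K c th)). set (P := edge_weight J epsbar A th).
    replace (E * (_ * P)) with ((exp (J (vsub x y) * epsbar (th x - th y)) - 1) * (E * P))
      by ring.
    apply Rmult_le_compat_r; [|exact Hup].
    apply Rmult_le_pos; [left; apply exp_pos | apply edge_weight_nonneg].
Qed.

End Domination.

(* Theorem: pi(D + {x,y}) <= 2 eps J_{x-y} pi(D). *)
Theorem mainTheorem4
  (J : V -> R)
  (HJnn : forall x, 0 <= J x)
  (HJsym : forall x, J x = J (vopp x))
  (HJsum : Un_cv (fun n => lsum (box n) J) 1)
  (M : nat) (HM : (1 <= M)%nat)
  (thbar : V -> R) (Hthbar : forall y, 0 <= thbar y < 2 * PI)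
  (K : nat) (c : nat -> R)
  (eps : R) (epsbar : R -> R)
  (Hepsbar_cont : continuity epsbar)
  (Hepsbar_per : forall t, epsbar (t + 2 * PI) = epsbar t)
  (Hepsbar_bd : forall t, 0 <= epsbar t <= eps)
  (Heps : 0 < eps <= 1)
  (D : list (V * V)) (HD : edge_set M D)
  (x y : V) (He : is_edge M (x, y))
  (HeD : forall d, In d D -> ~ same_edge (x, y) d) :
  piA J M thbar K c epsbar ((x, y) :: D)
    <= 2 * eps * J (vsub x y) * piA J M thbar K c epsbar D.
Proof.
  unfold piA, Rdiv. rewrite <- Rmult_assoc.
  apply Rmult_le_compat_r.
  - apply inv_Zpart_nonneg.
  - apply ZA_cons_le with (eps := eps); auto; lra.
Qed.
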